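(* Let $\mathbf{F}$ be a $\pi$-tree on a topological space $X$ and let $\alpha:\omega\to\omega$ be strictly increasing. Then there is a $\pi$-tree $\mathbf{H}$ on $X$ such that $\alpha[\mathrm{rise}_{\mathbf{F}}(p,U)]\subseteq\mathrm{rise}_{\mathbf{H}}(p,U)$ for all $p\in X$ and all neighbourhoods $U$ of $p$ in $X$.
   Context: Neighbourhoods are not necessarily open. $\omega=\{0,1,2,\dots\}$, ${}^{<\omega}\omega$ is the set of finite sequences of natural numbers. A tree is a strict partial order in which the set of predecessors of every node is well-ordered; $\mathrm{height}(x)$ is the ordinal isomorphic to the set of predecessors of $x$; a branch is a maximal chain; $\mathrm{sons}(x)$ is the set of immediate successors of $x$; $0$ denotes the least node. A foliage tree is a pair $\mathbf{F}=(T,l)$ with $T$ a tree (skeleton) and $l$ a function on its nodes, $\mathbf{F}_x:=l(x)$; tree notions apply via the skeleton. $\mathrm{shoot}_{\mathbf{F}}(v)=\{\bigcup_{x\in C}\mathbf{F}_x: C\text{ a cofinite subset of }\mathrm{sons}_{\mathbf{F}}(v)\}$; $\mathrm{scope}_{\mathbf{F}}(p)=\{x:p\in\mathbf{F}_x\}$. For families $\gamma,\delta$ of sets, $\gamma\gg\delta$ means every nonempty $D\in\delta$ contains some nonempty $G\in\gamma$. $\mathrm{rise}_{\mathbf{F}}(p,U)=\{\mathrm{height}_{\mathbf{F}}(v): v\in\mathrm{scope}_{\mathbf{F}}(p),\ \mathrm{shoot}_{\mathbf{F}}(v)\gg\{U\}\}$. $\mathbf{F}$ is locally strict if each non-maximal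 leaf $\mathbf{F}_x$ is the disjoint union of $\mathbf{F}_s$, $s\in\mathrm{sons}(x)$; has strict branches if it has a node and for each branch $B$, $\bigcap_{x\in B}\mathbf{F}_x$ is a singleton; is open in $X$ if all leaves are open in $X$; is a foliage $\omega,\omega$-tree if its skeleton is order-isomorphic to $({}^{<\omega}\omega,\subsetneq)$. A Baire foliage tree on $X$ is an open in $X$, locally strict foliage $\omega,\omega$-tree with strict branches and $\mathbf{F}_{0_{\mathbf{F}}}=X$. $\mathbf{F}$ grows into $X$ if for every $p\in X$ and neighbourhood $U$ of $p$ there is $z\in\mathrm{scope}_{\mathbf{F}}(p)$ with $\mathrm{shoot}_{\mathbf{F}}(z)\gg\{U\}$. A $\pi$-tree on $X$ is a Baire foliage tree on $X$ that grows into $X$. *)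

From HB Require Import structures.
From mathcomp Require Import all_boot all_order.
From mathcomp Require Import all_classical all_reals topology.
Set Implicit Arguments. Unset Strict Implicit. Unset Printing Implicit Defensive.
Local Open Scope classical_set_scope.

(* Skeleton: the tree ({}^{<omega}omega, strict initial segment). *)
Definition node := seq nat.
Definition tlt (s t : node) : Prop := prefix s t /\ s <> t.
Definition sons (v : node) : set node := [set rcons v n | n in [set: nat]].
Definition root : node := [::].
(* height of a node = ordinal type of its set of predecessors = its length *)
Definition height (v : node) : nat := size v.

Definition is_chain (B : set node) : Prop :=
  forall x y, B x -> B y -> x = y \/ tlt x y \/ tlt y x.
Definition is_branch (B : set node) : Prop :=
  is_chain B /\ forall B', is_chain B' -> B `<=` B' -> B' = B.

Definition foliage (X : Type) := node -> set X.

Section Foliage.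
Context {X : topologicalType}.
Implicit Types (F : foliage X) (p : X) (U : set X) (v : node).

Definition shoot F v : set (set X) :=
  [set S | exists C : set node, [/\ C `<=` sons v,
     finite_set (sons v `\` C) & S = \bigcup_(x in C) F x]].

Definition scope F p : set node := [set x | F x p].

Definition gg (gamma delta : set (set X)) : Prop :=
  forall D, delta D -> D !=set0 -> exists2 G, gamma G & G !=set0 /\ G `<=` D.

Definition rise F p U : set nat :=
  [set height v | v in [set v | scope F p v /\ gg (shoot F v) [set U]]].

Definition locally_strict F : Prop :=
  forall x, F x = \bigcup_(s in sons x) F s /\
    (forall s t, sons x s -> sons x t -> s <> t -> F s `&` F t = set0).

Definition strict_branches F : Prop :=
  (exists x : node, True) /\
  forall B, is_branch B -> exists p, \bigcap_(x in B) F x = [set p].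

Definition open_foliage F : Prop := forall x, open (F x).

Definition baire_foliage_tree F : Prop :=
  [/\ open_foliage F, locally_strict F, strict_branches F & F root = setT].

Definition grows_into F : Prop :=
  forall p U, nbhs p U -> exists2 z, scope F p z & gg (shoot F z) [set U].

Definition pi_tree F : Prop := baire_foliage_tree F /\ grows_into F.
End Foliage.

From Stdlib Require Cantor.
From mathcomp Require Import all_boot all_order.
From mathcomp Require Import all_classical all_reals topology.
Local Open Scope classical_set_scope.

(* The new tree runs through F at a slower pace.  Each node w of it lies over a
   node [anchor w] of F, and its leaf is the union of the leaves of an infinite
   family of sons of that anchor, enumerated injectively by [pending w].  The tree
   descends one level in F exactly at the levels alpha k; at every other level the
   pending sons are split into infinitely many infinite blocks by Cantor pairing.
   Leaves stay open and locally strict, and every branch lies over a branch of F,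
   so branches stay strict.  An F-node z of height k containing p is the anchor of
   a node w of height alpha k containing p whose sons have the leaves of distinct
   sons of z, so a cofinite shoot of z inside U yields a cofinite shoot of w
   inside U: this moves the rise by alpha and shows that the new tree grows into X. *)

Lemma prefix_comparable {T : eqType} (a b c : seq T) :
  prefix a c -> prefix b c -> prefix a b || prefix b a.
Proof.
rewrite !prefixE => /eqP ha /eqP hb; apply/orP.
case: (leqP (size a) (size b)) => [ab|/ltnW ba]; [left|right]; apply/eqP.
  by rewrite -[in RHS]ha -[in X in take _ X]hb take_takel.
by rewrite -[in RHS]hb -[in X in take _ X]ha take_takel.
Qed.

Lemma prefix_size_eq {T : eqType} {a b : seq T} :
  prefix a b -> size a = size b -> a = b.
Proof. by rewrite prefixE => /eqP ab sab; rewrite -ab sab take_size. Qed.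

Lemma is_chainP (B : set node) :
  is_chain B <-> forall x y, B x -> B y -> prefix x y || prefix y x.
Proof.
split=> [chB x y Bx By | chB x y Bx By].
  by case: (chB x y Bx By) => [->|[[xy _]|[yx _]]]; rewrite ?prefix_refl ?xy ?yx ?orbT.
have [->|ne] := eqVneq x y; first by left.
case/orP: (chB x y Bx By) => [xy|yx]; right; [left|right]; split=> //.
  exact/eqP.
by apply/eqP; rewrite eq_sym.
Qed.

Lemma branch_setU1 (B : set node) u :
  is_branch B -> (forall y, B y -> prefix u y || prefix y u) -> B u.
Proof.
move=> [chB maxB] cmp_u.
suff <- : B `|` [set u] = B by right.
apply: maxB => [|y By]; last by left.
apply/is_chainP => x y [Bx|->] [By|->]; rewrite ?prefix_refl //.
- exact: (is_chainP B).1 chB x y Bx By.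
- by rewrite orbC; exact: cmp_u.
- exact: cmp_u.
Qed.

Lemma branch_prefix_closed {B : set node} {y u : node} :
  is_branch B -> B y -> prefix u y -> B u.
Proof.
move=> brB By uy; apply: branch_setU1 => // z Bz.
case/orP: ((is_chainP B).1 brB.1 z y Bz By) => [zy|yz].
  by rewrite orbC; exact: prefix_comparable zy uy.
by rewrite (prefix_trans uy yz).
Qed.

Lemma chain_size_inj {B : set node} {a b : node} :
  is_chain B -> B a -> B b -> size a = size b -> a = b.
Proof.
move=> /is_chainP chB Ba Bb sab.
case/orP: (chB a b Ba Bb) => [ab|ba]; first exact: prefix_size_eq.
by symmetry; exact: prefix_size_eq.
Qed.

Lemma branch_size {B : set node} : is_branch B -> forall n, exists2 y, B y & size y = n.
Proof.
move=> brB; elim=> [|n [y By <-]].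
  by exists [::]; first by apply: branch_setU1 => // y _; rewrite prefix0s.
have [[z Bz yz]|short] := pselect (exists2 z, B z & size y < size z).
  exists (take (size y).+1 z).
    exact: branch_prefix_closed brB Bz (prefix_take _ _).
  by rewrite size_take_min; apply/minn_idPl.
exists (rcons y 0); last by rewrite size_rcons.
apply: branch_setU1 => // z Bz; apply/orP; right.
case/orP: ((is_chainP B).1 brB.1 z y Bz By) => [zy|yz].
  exact: prefix_trans zy (prefix_rcons _ _).
rewrite -(prefix_size_eq yz) ?prefix_rcons //; apply/eqP.
rewrite eqn_leq size_prefix // leqNgt; apply/negP => zy.
by apply: short; exists z.
Qed.

Lemma branch_mkseq (B : set node) :
  is_branch B -> exists s : nat -> nat, B = range (mkseq s).
Proof.
move=> brB.
have [x xP] : {x : nat -> node & forall n, B (x n) /\ size (x n) = n}.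
  apply: (@choice _ _ (fun n y => B y /\ size y = n)) => n.
  by have [y By yn] := branch_size brB n; exists y.
pose s n := nth 0 (x n.+1) n.
have x_mkseq n : x n = mkseq s n.
  elim: n => [|n IH]; first by apply/size0nil; rewrite (xP 0).2.
  have [Bx1 sx1] := xP n.+1.
  have xn : x n = take n (x n.+1).
    apply: (chain_size_inj brB.1 (xP n).1).
      exact: branch_prefix_closed brB Bx1 (prefix_take _ _).
    by rewrite (xP n).2 size_take sx1 ltnSn.
  by rewrite mkseqS -IH xn /s -take_nth ?sx1 // take_oversize // sx1.
exists s; apply/seteqP; split=> [y By | _ [n _ <-]].
  exists (size y) => //; rewrite -x_mkseq.
  exact: chain_size_inj brB.1 (xP _).1 By (xP _).2.
by rewrite -x_mkseq; exact: (xP n).1.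
Qed.

Lemma prefix_closure_branch {v : nat -> node} :
  (forall n m, n <= m -> prefix (v n) (v m)) -> (forall N, exists n, N <= size (v n)) ->
  is_branch [set u | exists n, prefix u (v n)].
Proof.
move=> v_incr v_unbd; split=> [|B chB sub].
  apply/is_chainP => x y [n xn] [m ym]; apply: prefix_comparable.
    exact: prefix_trans xn (v_incr _ _ (leq_maxl n m)).
  exact: prefix_trans ym (v_incr _ _ (leq_maxr n m)).
apply/seteqP; split=> // y By; have [n yn] := v_unbd (size y).
have Bv : B (v n) by apply: sub; exists n; exact: prefix_refl.
case/orP: ((is_chainP B).1 chB y (v n) By Bv) => [yv|vy]; first by exists n.
exists n; rewrite -(prefix_size_eq vy) ?prefix_refl //.
by apply/eqP; rewrite eqn_leq (size_prefix vy).
Qed.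

Lemma mkseq_prefix {T : eqType} (f : nat -> T) {n m} :
  n <= m -> prefix (mkseq f n) (mkseq f m).
Proof.
move=> /subnKC <-; elim: (m - n) => [|k IH]; first by rewrite addn0 prefix_refl.
by rewrite addnS mkseqS; exact: prefix_trans IH (prefix_rcons _ _).
Qed.

Lemma bigcup_fibres {I J T : Type} (A : I -> set T) (f : I -> J) :
  \bigcup_i A i = \bigcup_j \bigcup_(i in f @^-1` [set j]) A i.
Proof.
apply/seteqP; split=> [x [i _ Ax] | x [j _ [i _ Ax]]]; last by exists i.
by exists (f i) => //; exists i.
Qed.

Lemma bigcup_fibres_disjoint {I J T : Type} (A : I -> set T) (f : I -> J) j j' :
  (forall i i', i <> i' -> A i `&` A i' = set0) -> j <> j' ->
  (\bigcup_(i in f @^-1` [set j]) A i) `&` (\bigcup_(i in f @^-1` [set j']) A i)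
  = set0.
Proof.
move=> disjA jj'; apply/seteqP; split=> // x [[i fi Ai] [i' fi' Ai']].
have ii' : i <> i' by move=> eii; apply: jj'; rewrite -fi -fi' eii.
by rewrite -(disjA _ _ ii'); split.
Qed.

Section Foliages.
Context {X : topologicalType}.
Implicit Types (G : foliage X) (u w : node) (p : X).

Lemma locally_strictP G : locally_strict G <->
  forall w, G w = \bigcup_i G (rcons w i) /\
    (forall i j, i <> j -> G (rcons w i) `&` G (rcons w j) = set0).
Proof.
rewrite /locally_strict /sons; split=> lsG w; have [cover disj] := lsG w.
  split=> [|i j ij]; first by rewrite cover bigcup_image.
  by apply: disj; [exists i|exists j|move/rcons_inj => [] ?].
split=> [|_ _ [i _ <-] [j _ <-] ij]; first by rewrite bigcup_image.
by apply: disj => eij; apply: ij; rewrite eij.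
Qed.

Lemma leaf_neq0 {G} : strict_branches G -> forall u, G u !=set0.
Proof.
move=> G_sb u.
pose v n := u ++ nseq n 0.
have v_incr n m : n <= m -> prefix (v n) (v m).
  by move=> /subnKC <-; rewrite /v nseqD catA prefix_prefix.
have v_unbd N : exists n, N <= size (v n).
  by exists N; rewrite size_cat size_nseq leq_addl.
have [p Bp] := G_sb.2 _ (prefix_closure_branch v_incr v_unbd).
exists p; have : (\bigcap_(x in [set x | exists n, prefix x (v n)]) G x) p.
  by rewrite Bp.
by apply; exists 0; rewrite /v cats0 prefix_refl.
Qed.

Lemma gg_shoot_reindex {G H : foliage X} {v w} {e : nat -> nat} {U} :
  injective e -> (forall u, G u !=set0) ->
  (forall i, H (rcons w i) = G (rcons v (e i))) ->
  gg (shoot G v) [set U] -> gg (shoot H w) [set U].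
Proof.
move=> e_inj G_neq0 He ggU _ -> U0.
have [_ [C [Cv Cfin ->]] [_ CU]] := ggU U erefl U0.
pose f i := rcons v (e i).
pose I := [set i | C (f i)].
have finI : finite_set (~` I).
  apply: sub_finite_set (finite_preimage (f := f) _ Cfin) => [i nIi|].
    by split=> //; exists (e i).
  by move=> i j _ _ /rcons_inj [] /e_inj.
have [i Ii] : I !=set0.
  by apply/infinite_setN0/cofinite_set_infinite => //; exact: infinite_nat.
exists (\bigcup_(x in rcons w @` I) H x); last split.
- exists (rcons w @` I); split=> //; first by move=> _ [j _ <-]; exists j.
  apply: sub_finite_set (finite_image (rcons w) finI) => _ [[j _ <-] nIj].
  by exists j => // Ij; apply: nIj; exists j.
- have [q Gq] := G_neq0 (f i); exists q; exists (rcons w i); first by exists i.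
  by rewrite He.
- by move=> q [_ [j Ij <-]]; rewrite He => Gq; apply: CU; exists (f j).
Qed.

Context {G : foliage X}.
Hypothesis G_ls : locally_strict G.

Lemma leaf_bigcup_sons w : G w = \bigcup_i G (rcons w i).
Proof. exact: ((locally_strictP G).1 G_ls w).1. Qed.

Lemma leaf_sons_disjoint w {i j} :
  i <> j -> G (rcons w i) `&` G (rcons w j) = set0.
Proof. exact: ((locally_strictP G).1 G_ls w).2. Qed.

Lemma scope_son {w p} : G w p -> exists i, G (rcons w i) p.
Proof. by rewrite leaf_bigcup_sons => -[i _ Gp]; exists i. Qed.

Lemma leaf_rcons_sub {w i} : G (rcons w i) `<=` G w.
Proof. by move=> p Gp; rewrite leaf_bigcup_sons; exists i. Qed.

Lemma leaf_prefix_sub {u w} : prefix u w -> G w `<=` G u.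
Proof.
case/prefixP => s ->; elim/last_ind: s => [|s i IH]; first by rewrite cats0.
by rewrite -rcons_cat => p /leaf_rcons_sub /IH.
Qed.

Lemma scope_extend {w p} k : G w p -> exists2 s, size s = k & G (w ++ s) p.
Proof.
move=> Gp; elim: k => [|k [s <- Gs]]; first by exists [::]; rewrite ?cats0.
have [i Gi] := scope_son Gs; exists (rcons s i); first by rewrite size_rcons.
by rewrite -rcons_cat.
Qed.

End Foliages.

Section Slowdown.
Context {X : topologicalType} {F : foliage X} {alpha : nat -> nat}.
Hypothesis F_ls : locally_strict F.
Hypothesis F_sb : strict_branches F.
Hypothesis alpha_incr : forall m n, m < n -> alpha m < alpha n.

Definition slow_step (n : nat) (s : node * (nat -> nat)) (i : nat) :
    node * (nat -> nat) :=
  let: (v, e) := s in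
  if n == alpha (size v) then (rcons v (e i), id)
  else (v, fun j => e (Cantor.to_nat (i, j))).

Fixpoint slow_state_from (n : nat) (s : node * (nat -> nat)) (w : node) :=
  if w is i :: w' then slow_state_from n.+1 (slow_step n s i) w' else s.

Definition slow_state (w : node) := slow_state_from 0 ([::], id) w.
Definition anchor (w : node) : node := (slow_state w).1.
Definition pending (w : node) : nat -> nat := (slow_state w).2.
Definition descends (w : node) : bool := size w == alpha (size (anchor w)).

Definition slowdown : foliage X :=
  fun w => \bigcup_k F (rcons (anchor w) (pending w k)).

Lemma slow_state_rcons w i :
  slow_state (rcons w i) = slow_step (size w) (slow_state w) i.
Proof.
rewrite /slow_state -[size w]add0n.
elim: w 0 ([::], id) => [|j w IH] n s /=; first by rewrite addn0.
by rewrite IH addSnnS.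
Qed.

Lemma anchor_rcons w i : anchor (rcons w i) =
  if descends w then rcons (anchor w) (pending w i) else anchor w.
Proof.
rewrite /descends /anchor /pending slow_state_rcons.
by case: slow_state => v e /=; case: ifP.
Qed.

Lemma pending_rcons w i : pending (rcons w i) =
  if descends w then id else fun j => pending w (Cantor.to_nat (i, j)).
Proof.
rewrite /descends /anchor /pending slow_state_rcons.
by case: slow_state => v e /=; case: ifP.
Qed.

Lemma pending_inj w : injective (pending w).
Proof.
elim/last_ind: w => [//|w i IH]; rewrite pending_rcons.
case: ifP => [_ //|_ j j' /IH].
by move/(can_inj Cantor.cancel_of_to) => -[].
Qed.

Lemma size_le_anchor w : size w <= alpha (size (anchor w)).
Proof.
elim/last_ind: w => [//|w i IH]; rewrite anchor_rcons size_rcons /descends.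
case: eqVneq => [-> | ne]; first by rewrite size_rcons alpha_incr.
by rewrite ltn_neqAle ne.
Qed.

Lemma anchor_prefix {w w'} : prefix w w' -> prefix (anchor w) (anchor w').
Proof.
case/prefixP => s ->; elim/last_ind: s => [|s i IH].
  by rewrite cats0 prefix_refl.
rewrite -rcons_cat anchor_rcons; case: ifP => // _.
exact: prefix_trans IH (prefix_rcons _ _).
Qed.

Lemma anchor_stable {w w'} :
  prefix w w' -> size w' <= alpha (size (anchor w)) -> anchor w' = anchor w.
Proof.
case/prefixP => s ->; elim/last_ind: s => [|s i IH]; first by rewrite cats0.
rewrite -rcons_cat size_rcons => lt; have {}IH := IH (ltnW lt).
by rewrite anchor_rcons /descends IH ltn_eqF.
Qed.

Lemma slowdown_descend w i :
  descends w -> slowdown (rcons w i) = F (anchor (rcons w i)).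
Proof. by move=> dw; rewrite /slowdown pending_rcons dw -leaf_bigcup_sons. Qed.

Definition owner (w : node) (k : nat) : nat :=
  if descends w then k else (Cantor.of_nat k).1.

Lemma slowdown_rcons w i : slowdown (rcons w i) =
  \bigcup_(k in owner w @^-1` [set i]) F (rcons (anchor w) (pending w k)).
Proof.
rewrite /owner; case dw: (descends w).
  by rewrite slowdown_descend // anchor_rcons dw bigcup_set1.
rewrite /slowdown anchor_rcons pending_rcons dw; apply/seteqP; split=> p.
  case=> j _ Fp; exists (Cantor.to_nat (i, j)) => //.
  change ((Cantor.of_nat (Cantor.to_nat (i, j))).1 = i).
  by rewrite Cantor.cancel_of_to.
case=> k ik Fp; exists (Cantor.of_nat k).2 => //.
by rewrite -ik -surjective_pairing Cantor.cancel_to_of.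
Qed.

Lemma slowdown_sub_anchor w : slowdown w `<=` F (anchor w).
Proof. by move=> p [k _]; apply: leaf_rcons_sub. Qed.

Lemma slowdown_locally_strict : locally_strict slowdown.
Proof.
apply/locally_strictP => w; split=> [|i j ij].
  rewrite {1}/slowdown (bigcup_fibres _ (owner w)).
  by apply: eq_bigcupr => i _; rewrite slowdown_rcons.
rewrite !slowdown_rcons; apply: bigcup_fibres_disjoint ij => k k' kk'.
by apply: leaf_sons_disjoint => // /pending_inj.
Qed.

Lemma slowdown_nil : slowdown [::] = F [::].
Proof. by rewrite (leaf_bigcup_sons F_ls [::]). Qed.

Lemma descends_at_alpha w w' : prefix w w' -> size w' = alpha (size (anchor w)) ->
  descends w' /\ anchor w' = anchor w.
Proof.
move=> ww' sw'; have aw' : anchor w' = anchor w by rewrite (anchor_stable ww') ?sw'.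
by rewrite /descends aw' sw'.
Qed.

Lemma slowdown_reach {w p} : slowdown w p ->
  exists w', [/\ descends w', anchor w' = anchor w & slowdown w' p].
Proof.
move=> Hp; have [s ss Hs] :=
  scope_extend slowdown_locally_strict (alpha (size (anchor w)) - size w) Hp.
have [dws aws] : descends (w ++ s) /\ anchor (w ++ s) = anchor w.
  apply: descends_at_alpha; first exact: prefix_prefix.
  by rewrite size_cat ss subnKC ?size_le_anchor.
by exists (w ++ s).
Qed.

Lemma slowdown_over {z p} : F z p ->
  exists w, [/\ descends w, anchor w = z & slowdown w p].
Proof.
elim/last_ind: z p => [|z m IH] p Fp.
  by apply: (@slowdown_reach [::]); rewrite slowdown_nil.
have [w [dw awz Hp]] := IH p (leaf_rcons_sub F_ls _ Fp).
have [i Hi] := scope_son slowdown_locally_strict Hp.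
have awi : anchor (rcons w i) = rcons z (pending w i) by rewrite anchor_rcons dw awz.
have im : pending w i = m.
  apply: contrapT => im; have := leaf_sons_disjoint F_ls z im.
  by rewrite -awi -slowdown_descend // => /seteqP [/(_ p) + _]; apply.
have [w' [dw' aw' Hp']] := slowdown_reach Hi.
by exists w'; rewrite aw' awi im.
Qed.

Lemma path_descends (s : nat -> nat) n : exists2 m, n <= m &
  descends (mkseq s m) /\ anchor (mkseq s m) = anchor (mkseq s n).
Proof.
have n_le : n <= alpha (size (anchor (mkseq s n))).
  by rewrite -[n in n <= _](size_mkseq s n) size_le_anchor.
exists (alpha (size (anchor (mkseq s n)))) => //.
by apply: descends_at_alpha; rewrite ?size_mkseq // mkseq_prefix.
Qed.

Lemma slowdown_strict_branches : strict_branches slowdown.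
Proof.
split=> [|B /branch_mkseq [s ->]]; first by exists [::].
pose v n := anchor (mkseq s n).
have v_incr n m : n <= m -> prefix (v n) (v m) by move/(mkseq_prefix s)/anchor_prefix.
have v_unbd N : exists n, N <= size (v n).
  elim: N => [|N [n Nn]]; first by exists 0.
  have [m nm [dm vm]] := path_descends s n.
  by exists m.+1; rewrite /v mkseqS anchor_rcons dm size_rcons vm.
have [p Bp] := F_sb.2 _ (prefix_closure_branch v_incr v_unbd).
have pF n : F (v n) p.
  have : (\bigcap_(u in [set u | exists n, prefix u (v n)]) F u) p by rewrite Bp.
  by apply; exists n; exact: prefix_refl.
exists p; apply/seteqP; split=> [q qB | _ ->].
  rewrite -Bp => u [n un]; apply: (leaf_prefix_sub F_ls un).
  by apply: slowdown_sub_anchor; apply: qB; exists n.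
move=> _ [n _ <-]; have [m nm [dm _]] := path_descends s n.
apply: (leaf_prefix_sub slowdown_locally_strict (mkseq_prefix s (leqW nm))).
by rewrite mkseqS slowdown_descend // -mkseqS; exact: pF.
Qed.

Lemma slowdown_shoot w U : descends w ->
  gg (shoot F (anchor w)) [set U] -> gg (shoot slowdown w) [set U].
Proof.
move=> dw; apply: (gg_shoot_reindex (pending_inj w) (leaf_neq0 F_sb)) => i.
by rewrite slowdown_descend // anchor_rcons dw.
Qed.

Lemma slowdown_rise {z p U} : F z p -> gg (shoot F z) [set U] ->
  exists w, [/\ size w = alpha (size z), slowdown w p & gg (shoot slowdown w) [set U]].
Proof.
move=> /slowdown_over [w [dw <- Hp]] zU; exists w; split=> //; first exact/eqP.
exact: slowdown_shoot.
Qed.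

Lemma slowdown_baire : open_foliage F -> F [::] = setT -> baire_foliage_tree slowdown.
Proof.
move=> F_open F_root; split.
- by move=> w; apply: bigcup_open => k _; exact: F_open.
- exact: slowdown_locally_strict.
- exact: slowdown_strict_branches.
- by rewrite slowdown_nil.
Qed.

End Slowdown.

Theorem lemma14 (X : topologicalType) (F : foliage X) (alpha : nat -> nat) :
  pi_tree F ->
  (forall m n, (m < n)%N -> (alpha m < alpha n)%N) ->
  exists H : foliage X, pi_tree H /\
    forall (p : X) (U : set X), nbhs p U ->
      alpha @` rise F p U `<=` rise H p U.
Proof.
move=> [[F_open F_ls F_sb F_root] F_grows] alpha_incr.
exists (@slowdown X F alpha); split.
  split; first exact: slowdown_baire.
  move=> p U /F_grows [z zp zU].
  by have [w [_ wp wU]] := slowdown_rise F_ls F_sb alpha_incr zp zU; exists w.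
move=> p U _ _ [_ [z [zp zU] <-] <-].
by have [w [wz wp wU]] := slowdown_rise F_ls F_sb alpha_incr zp zU; exists w.
Qed.
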